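(* Every graph of pathwidth at most $1$ and order $n$ has at most $2^{n/2}$ independent dominating sets (equivalently, maximal independent sets). The bound is attained by the path on $2$ vertices.
   Context: An independent dominating set of $G=(V,E)$ is a set $D\subseteq V$ with no edge inside $D$ such that every vertex outside $D$ has at least one neighbour in $D$; i.e. a $(\{0\},\mathbb{N}^+)$-dominating set. Order = number of vertices; pathwidth is the standard notion. *)

From mathcomp Require Import all_boot.
Set Implicit Arguments. Unset Strict Implicit. Unset Printing Implicit Defensive.

Definition simple_graph (T : finType) (e : rel T) : Prop :=
  symmetric e /\ irreflexive e.

Definition independent_dominating (T : finType) (e : rel T) (D : {set T}) : bool :=
  [forall x in D, forall y in D, ~~ e x y] &&
  [forall x in ~: D, exists y in D, e x y].

Definition num_ids (T : finType) (e : rel T) : nat :=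
  #|[set D : {set T} | independent_dominating e D]|.

Definition path_decomposition (T : finType) (e : rel T) (B : seq {set T}) : Prop :=
  (forall v : T, exists2 X, X \in B & v \in X) /\
  (forall u v : T, e u v -> exists2 X, X \in B & (u \in X) && (v \in X)) /\
  (forall (v : T) (i j k : nat), i <= j -> j <= k -> k < size B ->
      v \in nth set0 B i -> v \in nth set0 B k -> v \in nth set0 B j).

(* Width of a decomposition = (max bag size) - 1; pathwidth <= k iff there
   is a path decomposition all of whose bags have size at most k+1. *)
Definition pathwidth_le (T : finType) (e : rel T) (k : nat) : Prop :=
  exists B : seq {set T}, path_decomposition e B /\
    (forall X, X \in B -> #|X| <= k.+1).

Definition P2 : rel 'I_2 := fun x y => x != y.

From mathcomp Require Import all_boot zify.
Set Implicit Arguments. Unset Strict Implicit. Unset Printing Implicit Defensive.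

(* We count, for every vertex set S, the independent dominating sets of the
   subgraph induced by S ([cnt_ids S]).  Two facts drive the proof.
   1. Pathwidth <= k gives, in every nonempty S, a vertex u with at most k
      neighbours in S: take u in S whose last bag is earliest; every
      neighbour of u in S must still be present in that bag.
   2. Every independent dominating set of S meets the closed neighbourhood
      N[u] of any u in S, and those containing w inject (by deleting w) into
      the independent dominating sets of S \ N[w].
   For pathwidth 1, u is either isolated in S, giving cnt(S) <= cnt(S \ u),
   or has a single neighbour v, giving cnt(S) <= cnt(S \ N[u]) + cnt(S \ N[v])
   with both sets of size <= |S| - 2.  Since (a + b)^2 <= 4 * 2^(|S|-2) when
   a^2, b^2 <= 2^(|S|-2), induction on |S| yields cnt(S)^2 <= 2^|S|. *)

Definition cnbhd (T : finType) (e : rel T) (u : T) : {set T} :=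
  u |: [set w | e u w].

Section PathDecomposition.
Variables (T : finType) (e : rel T).

(* Index of the last bag of B containing v (0 if there is none). *)
Definition last_bag (B : seq {set T}) (v : T) : nat :=
  \max_(i < size B | v \in nth set0 B i) i.

Lemma last_bag_ge (B : seq {set T}) (v : T) (i : nat) :
  i < size B -> v \in nth set0 B i -> i <= last_bag B v.
Proof. by move=> iB vi; exact: (leq_bigmax_cond (Ordinal iB)). Qed.

Lemma mem_last_bag (B : seq {set T}) (v : T) (i : nat) :
  i < size B -> v \in nth set0 B i ->
  last_bag B v < size B /\ v \in nth set0 B (last_bag B v).
Proof.
move=> iB vi; have pos : 0 < #|[pred j : 'I_(size B) | v \in nth set0 B j]|.
  by apply/card_gt0P; exists (Ordinal iB).
have [j vj jmax] := eq_bigmax_cond (@nat_of_ord _) pos.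
by rewrite /last_bag jmax ltn_ord.
Qed.

(* Graphs of pathwidth <= k are k-degenerate, in the closed-neighbourhood
   form: every nonempty S has a vertex u with |S ∩ N[u]| <= k + 1.  The
   vertex of S leaving the decomposition first sees all its neighbours in S
   inside its last bag. *)
Lemma pathwidth_low_degree (k : nat) (S : {set T}) :
  pathwidth_le e k -> S != set0 ->
  exists2 u, u \in S & #|S :&: cnbhd e u| <= k.+1.
Proof.
move=> [B [[cover [edges interval]] small]] /set0Pn [u0 u0S].
pose u := [arg min_(x < u0 in S) last_bag B x].
have [uS umin] : u \in S /\ forall w, w \in S -> last_bag B u <= last_bag B w.
  by rewrite /u; case: arg_minnP.
exists u => //; pose p := last_bag B u.
have [X /(nthP set0) [i iB Xi] uX] := cover u.
have [pB up] : p < size B /\ u \in nth set0 B p by apply: mem_last_bag iB _; rewrite Xi.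
have /small : nth set0 B p \in B by exact: mem_nth.
apply: leq_trans; apply/subset_leq_card/subsetP => w.
rewrite !inE => /andP [wS /predU1P [-> // | euw]].
have [Y /(nthP set0) [j jB Yj] /andP [uY wY]] := edges u w euw.
rewrite -Yj in uY wY; have [qB wq] := mem_last_bag jB wY.
apply: (interval w j p (last_bag B w)) => //; last exact: umin.
exact: last_bag_ge.
Qed.

End PathDecomposition.

Section Counting.
Variables (T : finType) (e : rel T).
Hypothesis e_sym : symmetric e.

Definition ids_in (S D : {set T}) : bool :=
  [&& D \subset S, [forall x in D, forall y in D, ~~ e x y] &
      [forall x in S :\: D, exists y in D, e x y]].

Definition cnt_ids (S : {set T}) : nat := #|[set D | ids_in S D]|.

Lemma ids_inP (S D : {set T}) :
  reflect [/\ D \subset S, {in D &, forall x y, ~~ e x y} &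
              {in S, forall x, x \notin D -> exists2 y, y \in D & e x y}]
          (ids_in S D).
Proof.
apply: (iffP and3P) => [[sDS /forall_inP ind /forall_inP dom] | [sDS ind dom]].
  split=> // [x y xD yD | x xS xD]; first by have /forall_inP := ind x xD; apply.
  have xSD : x \in S :\: D by rewrite inE xD xS.
  by have /exists_inP [y yD exy] := dom x xSD; exists y.
split=> //; apply/forall_inP => x.
  by move=> xD; apply/forall_inP => y yD; exact: ind.
rewrite inE => /andP [xD xS]; have [y yD exy] := dom x xS xD.
by apply/exists_inP; exists y.
Qed.

Lemma cnt_ids_setT : cnt_ids [set: T] = num_ids e.
Proof.
by apply: eq_card => D; rewrite !inE /ids_in subsetT setTD.
Qed.

Lemma cnt_ids0 : cnt_ids set0 <= 1.
Proof.
rewrite -(cards1 (set0 : {set T})); apply/subset_leq_card/subsetP => D.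
by rewrite !inE => /ids_inP [sD0 _ _]; rewrite -subset0.
Qed.

Lemma ids_in_cnbhd (S D : {set T}) (u : T) :
  ids_in S D -> u \in S -> exists2 w, w \in D & w \in S :&: cnbhd e u.
Proof.
move=> /ids_inP [sDS _ dom] uS; have [uD | uD] := boolP (u \in D).
  by exists u; rewrite // !inE uS eqxx.
have [y yD euy] := dom u uS uD.
by exists y; rewrite // !inE (subsetP sDS) // euy orbT.
Qed.

(* Deleting w maps the independent dominating sets of S containing w
   injectively to independent dominating sets of S \ N[w]. *)
Lemma cnt_ids_containing (S : {set T}) (w : T) :
  #|[set D | ids_in S D & w \in D]| <= cnt_ids (S :\: cnbhd e w).
Proof.
rewrite -(@card_in_imset _ _ (fun D => D :\ w)); last first.
  move=> D1 D2; rewrite !inE => /andP [_ wD1] /andP [_ wD2] eqD.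
  by rewrite -(setD1K wD1) -(setD1K wD2) eqD.
apply/subset_leq_card/subsetP => D' /imsetP [D]; rewrite inE => /andP [idsD wD] ->.
move: idsD => /ids_inP [sDS ind dom]; rewrite inE; apply/ids_inP; split.
- apply/subsetP => x; rewrite !inE => /andP [xw xD].
  by rewrite (negPf xw) (subsetP sDS) // andbT; apply: ind.
- by move=> x y /setD1P [_ xD] /setD1P [_ yD]; apply: ind.
- move=> x; rewrite !inE negb_or => /andP [/andP [xw nexw] xS].
  rewrite xw /= => xD; have [y yD exy] := dom x xS xD.
  exists y => //; rewrite !inE yD andbT; apply: contraNneq nexw => yw.
  by rewrite e_sym -yw.
Qed.

(* An isolated vertex u of S belongs to every independent dominating set. *)
Lemma cnt_ids_isolated (S : {set T}) (u : T) :
  u \in S -> S :&: cnbhd e u \subset [set u] ->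
  cnt_ids S <= cnt_ids (S :\: cnbhd e u).
Proof.
move=> uS sNu; apply: leq_trans (cnt_ids_containing S u).
apply/subset_leq_card/subsetP => D; rewrite !inE => idsD; rewrite idsD /=.
have [w wD /(subsetP sNu)] := ids_in_cnbhd idsD uS.
by rewrite inE => /eqP <-.
Qed.

(* If u has the single neighbour v in S, every independent dominating set
   contains u or v. *)
Lemma cnt_ids_pendant (S : {set T}) (u v : T) :
  u \in S -> S :&: cnbhd e u \subset [set u; v] ->
  cnt_ids S <= cnt_ids (S :\: cnbhd e u) + cnt_ids (S :\: cnbhd e v).
Proof.
move=> uS sNu.
apply: leq_trans (leq_add (cnt_ids_containing S u) (cnt_ids_containing S v)).
apply: leq_trans (leq_card_setU _ _); apply/subset_leq_card/subsetP => D.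
rewrite !inE => idsD; rewrite idsD /=.
have [w wD /(subsetP sNu)] := ids_in_cnbhd idsD uS.
by rewrite !inE => /orP [] /eqP <-; rewrite wD ?orbT.
Qed.

End Counting.

Lemma card_setD_le (T : finType) (S X A : {set T}) :
  A \subset S -> A \subset X -> #|S :\: X| + #|A| <= #|S|.
Proof.
move=> sAS sAX; rewrite -(cardsID A S) (setIidPr sAS) addnC leq_add2l.
exact/subset_leq_card/setDS.
Qed.

(* Arithmetic of the pendant step, via (a + b)^2 <= 2 (a^2 + b^2). *)
Lemma sq_add_le (a b c m : nat) :
  c <= a + b -> a ^ 2 <= 2 ^ m -> b ^ 2 <= 2 ^ m -> c ^ 2 <= 2 ^ m.+2.
Proof.
move=> cab; rewrite !expnS; move: (2 ^ m) => N ha hb.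
have : c ^ 2 <= (a + b) ^ 2 by rewrite leq_exp2r.
nia.
Qed.

Lemma small_cnbhd_cases (T : finType) (N : {set T}) (u : T) :
  u \in N -> #|N| <= 2 ->
  N \subset [set u] \/ exists2 v, v != u & N = [set u; v].
Proof.
move=> uN N2; have [N0 | /set0Pn [v /setD1P [vu vN]]] := eqVneq (N :\ u) set0.
  left; apply/subsetP => x xN; rewrite inE; apply/negPn/negP => xu.
  have : x \in N :\ u by apply/setD1P.
  by rewrite N0 inE.
right; exists v => //; apply/esym/eqP; rewrite eqEcard cards2 eq_sym vu N2 andbT.
by rewrite subUset !sub1set uN vN.
Qed.

Section SquareBound.
Variables (T : finType) (e : rel T).
Hypothesis e_sym : symmetric e.
Hypothesis low_degree :
  forall S : {set T}, S != set0 -> exists2 u, u \in S & #|S :&: cnbhd e u| <= 2.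

Theorem cnt_ids_sq_le (S : {set T}) : cnt_ids e S ^ 2 <= 2 ^ #|S|.
Proof.
have [n] := ubnP #|S|; elim: n S => // n IH S /ltnSE leSn.
have [-> | S0] := eqVneq S set0.
  by rewrite cards0; move: (cnt_ids0 e); case: cnt_ids => [|[]].
have IH_le (X : {set T}) (k : nat) :
    #|X| + k.+1 <= #|S| -> cnt_ids e X ^ 2 <= 2 ^ (#|S| - k.+1).
  move=> XS; apply: leq_trans (IH X _) _; first lia.
  by apply: leq_pexp2l; lia.
have [u uS degu] := low_degree S0.
have uNu : u \in S :&: cnbhd e u by rewrite !inE uS eqxx.
have [sNu | [v vu eNu]] := small_cnbhd_cases uNu degu.
  have small : #|S :\: cnbhd e u| + 1 <= #|S|.
    by rewrite -(cards1 u) card_setD_le // sub1set; case/setIP: uNu.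
  have drop_u : cnt_ids e S ^ 2 <= cnt_ids e (S :\: cnbhd e u) ^ 2.
    by rewrite leq_exp2r // cnt_ids_isolated.
  apply: leq_trans drop_u (leq_trans (IH_le _ 0 small) _).
  by apply: leq_pexp2l; lia.
have euv : e u v.
  by move: (set22 u v); rewrite -eNu !inE (negPf vu) => /andP [].
have small w : w \in [set u; v] -> #|S :\: cnbhd e w| + 2 <= #|S|.
  move=> wuv; have uvS : [set u; v] \subset S by rewrite -eNu subsetIl.
  have uvN : [set u; v] \subset cnbhd e w.
    move: wuv; rewrite !inE => /orP [] /eqP ->; first by rewrite -eNu subsetIr.
    by rewrite subUset !sub1set !inE eqxx e_sym euv orbT.
  by have := card_setD_le uvS uvN; rewrite cards2 eq_sym vu.
have S2 : 2 <= #|S| by apply: leq_trans (small u (set21 u v)); exact: leq_addl.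
have -> : #|S| = (#|S| - 2).+2 by rewrite -addn2 subnK.
have sNu : S :&: cnbhd e u \subset [set u; v] by rewrite eNu.
apply: sq_add_le (cnt_ids_pendant e_sym uS sNu) _ _.
  exact/IH_le/small/set21.
exact/IH_le/small/set22.
Qed.

End SquareBound.

Lemma P2_simple : simple_graph P2.
Proof. by split=> [x y | x]; rewrite /P2 ?eqxx // eq_sym. Qed.

Lemma P2_pathwidth1 : pathwidth_le P2 1.
Proof.
exists [:: setT]; split; last first.
  by move=> X; rewrite inE => /eqP ->; rewrite cardsT card_ord.
split; first by move=> v; exists setT; rewrite ?inE.
split; first by move=> u v _; exists setT; rewrite ?inE.
by move=> v [|i] [|j] [|k] //= ij jk; rewrite ?nth_nil.
Qed.

Lemma P2_ids (D : {set 'I_2}) : independent_dominating P2 D = (#|D| == 1).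
Proof.
apply/idP/cards1P.
- case/andP => /forall_inP ind /forall_inP dom.
  have /set0Pn [x xD] : D != set0.
    apply/set0Pn; have [h | h] := boolP (ord0 \in D); first by exists ord0.
    have /dom /exists_inP [y yD _] : ord0 \in ~: D by rewrite inE.
    by exists y.
  exists x; apply/setP => y; rewrite inE.
  apply/idP/eqP => [yD | -> //]; apply/eqP.
  by have /forall_inP /(_ y yD) := ind x xD; rewrite /P2 negbK eq_sym.
- case=> x ->; apply/andP; split.
  + apply/forall_inP => a; rewrite inE => /eqP ->.
    by apply/forall_inP => b; rewrite inE => /eqP ->; rewrite /P2 eqxx.
  + apply/forall_inP => y; rewrite !inE => yx.
    by apply/exists_inP; exists x; rewrite ?inE.
Qed.

Lemma num_ids_P2 : num_ids P2 = 2.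
Proof.
transitivity 'C(#|'I_2|, 1); last by rewrite card_ord.
by rewrite -card_draws /num_ids; apply: eq_card => D; rewrite !inE P2_ids.
Qed.

Theorem mainTheorem6 :
  (forall (T : finType) (e : rel T),
      simple_graph e -> pathwidth_le e 1 ->
      num_ids e ^ 2 <= 2 ^ #|T|) /\
  (simple_graph P2 /\ pathwidth_le P2 1 /\ num_ids P2 ^ 2 = 2 ^ #|'I_2|).
Proof.
split.
  move=> T e [e_sym _] pw1.
  have low_degree S : S != set0 -> exists2 u, u \in S & #|S :&: cnbhd e u| <= 2.
    exact: pathwidth_low_degree pw1.
  by rewrite -cnt_ids_setT -cardsT; exact: cnt_ids_sq_le.
split; first exact: P2_simple.
split; first exact: P2_pathwidth1.
by rewrite num_ids_P2 card_ord.
Qed.
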